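(* Suppose the filtered vector space $(V,\ell)$ satisfies the best approximation property. Then $V$ has a basis which is $\ell$-orthogonal. Moreover, if $W\le V$ is a subspace and $S$ is an $\ell$-orthogonal basis of $W$, then there is an $\ell$-orthogonal basis of $V$ containing $S$.
   Context: A filtered vector space over a field $\kappa$ is a pair $(V,\ell)$ with $V$ a $\kappa$-vector space and $\ell\colon V\to\mathbb{R}\cup\{-\infty\}$ such that $\ell(v)=-\infty$ iff $v=0$, $\ell(cv)=\ell(v)$ for $c\in\kappa\setminus\{0\}$, and $\ell(v+w)\le\max\{\ell(v),\ell(w)\}$. A subset $S\subset V\setminus\{0\}$ is $\ell$-orthogonal if $\ell(\sum_{i=1}^n c_iv_i)=\max\{\ell(v_i):c_i\neq0\}$ for all finitely many distinct $v_1,\dots,v_n\in S$ and $c_i\in\kappa$. $(V,\ell)$ satisfies the best approximation property if for every proper subspace $W\subsetneq V$ and every $v\in V\setminus W$ there is $w_0\in W$ with $\ell(v-w_0)\le\ell(v-w)$ for all $w\in W$. *)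

(* K a field, V a (possibly infinite-dimensional) K-vector
   space (lmodType K), values of the filtration in \bar R = R U {-oo,+oo}
   for R : realType, with +oo excluded by hypothesis. *)
From HB Require Import structures.
From mathcomp Require Import all_boot all_order all_algebra.
From mathcomp Require Import reals constructive_ereal.
Set Implicit Arguments. Unset Strict Implicit. Unset Printing Implicit Defensive.
Import Order.TTheory GRing.Theory Num.Theory.
Local Open Scope ring_scope.

Section FilteredVS.
Variables (K : fieldType) (R : realType) (V : lmodType K).

Definition filtered (l : V -> \bar R) : Prop :=
  [/\ (forall v, l v <> +oo%E),
      (forall v, l v = -oo%E <-> v = 0%R),
      (forall (c : K) v, c != 0 -> l (c *: v)%R = l v) &
      (forall v w, (l (v + w)%R <= maxe (l v) (l w))%E)].

Definition subspace (W : V -> Prop) : Prop :=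
  W 0%R /\ forall (a : K) u v, W u -> W v -> W (a *: u + v)%R.

Definition lincomb (s : seq V) (c : nat -> K) : V :=
  (\sum_(i < size s) c i *: s`_i)%R.

Definition in_span (S : V -> Prop) (v : V) : Prop :=
  exists (s : seq V) (c : nat -> K), (forall x, x \in s -> S x) /\ v = lincomb s c.

Definition lin_indep (S : V -> Prop) : Prop :=
  forall (s : seq V) (c : nat -> K), uniq s -> (forall x, x \in s -> S x) ->
    lincomb s c = 0%R -> forall i, (i < size s)%N -> c i = 0%R.

Definition basis_in (W : V -> Prop) (S : V -> Prop) : Prop :=
  (forall x, S x -> W x) /\ lin_indep S /\ (forall w, W w -> in_span S w).

Definition l_orthogonal (l : V -> \bar R) (S : V -> Prop) : Prop :=
  (forall x, S x -> x <> 0%R) /\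
  forall (s : seq V) (c : nat -> K), uniq s -> (forall x, x \in s -> S x) ->
    l (lincomb s c) = \big[maxe/-oo%E]_(i < size s | c i != 0%R) l s`_i.

Definition best_approx (l : V -> \bar R) : Prop :=
  forall (W : V -> Prop), subspace W -> (exists v, ~ W v) ->
    forall v, ~ W v -> exists2 w0, W w0 & forall w, W w -> (l (v - w0)%R <= l (v - w)%R)%E.

End FilteredVS.

From HB Require Import structures.
From mathcomp Require Import all_boot all_order all_algebra.
From mathcomp Require Import reals constructive_ereal.
From mathcomp Require Import boolp classical_sets.
Import Order.TTheory GRing.Theory Num.Theory.
Local Open Scope classical_set_scope.
Local Open Scope ring_scope.
Set Implicit Arguments. Unset Strict Implicit.

(* Extend S by Zorn's lemma to a maximal l-orthogonal set T.  If some v were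
   not in the span W of T, the best approximation w0 of v in W gives
   u := v - w0 with l u <= l (u + w) for all w in W; this forces
   l (c u + w) = max (l u) (l w) for c != 0, so T + {u} is still
   l-orthogonal, contradicting maximality.  Orthogonal sets are linearly
   independent, since a vanishing combination has level -oo. *)

Section Combinations.
Variables (K : fieldType) (R : realType) (V : lmodType K) (l : V -> \bar R).

(* Linear combinations are handled as sequences of (vector, coefficient)
   pairs, which are stable under [rem], [perm_eq] and concatenation. *)
Definition pcomb (t : seq (V * K)) : V := \sum_(p <- t) p.2 *: p.1.

Definition plevel (t : seq (V * K)) : \bar R :=
  \big[maxe/-oo%E]_(p <- t | p.2 != 0) l p.1.

Definition pairs (s : seq V) (c : nat -> K) : seq (V * K) :=
  [seq (s`_i, c i) | i <- iota 0 (size s)].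

Lemma lincomb_pcomb s c : lincomb s c = pcomb (pairs s c).
Proof.
by rewrite /lincomb /pcomb /pairs big_map -(subn0 (size s)) -/(index_iota 0 _) big_mkord subn0.
Qed.

Lemma bigmax_plevel s (c : nat -> K) :
  \big[maxe/-oo%E]_(i < size s | c i != 0) l s`_i = plevel (pairs s c).
Proof.
by rewrite /plevel /pairs big_map -(subn0 (size s)) -/(index_iota 0 _) big_mkord subn0.
Qed.

Lemma unzip1_pairs s c : unzip1 (pairs s c) = s.
Proof. by rewrite /pairs /unzip1 -map_comp -[RHS](mkseq_nth 0). Qed.

Lemma pairs_unzip t : pairs (unzip1 t) (fun i => (unzip2 t)`_i) = t.
Proof.
apply: (@eq_from_nth _ (0, 0)); first by rewrite size_map size_iota size_map.
move=> i; rewrite size_map size_iota size_map => ti.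
rewrite (nth_map 0) ?size_iota ?size_map // nth_iota // add0n.
by rewrite (nth_map (0, 0)) // (nth_map (0, 0)) //; case: (nth _ t i).
Qed.

Definition porthogonal (X : set V) : Prop :=
  (forall x, X x -> x <> 0) /\
  forall t, uniq (unzip1 t) -> (forall p, p \in t -> X p.1) ->
    l (pcomb t) = plevel t.

Lemma l_orthogonalE X : l_orthogonal l X <-> porthogonal X.
Proof.
split=> -[nz oX]; split=> //.
  move=> t ut tX; rewrite -(pairs_unzip t) -lincomb_pcomb -bigmax_plevel.
  by apply: oX => // x /mapP [p pt ->]; apply: tX.
move=> s c us sX; rewrite lincomb_pcomb bigmax_plevel.
apply: oX => [|p pt]; first by rewrite unzip1_pairs.
by apply: sX; rewrite -(unzip1_pairs s c); apply: map_f.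
Qed.

Definition pspan (X : set V) (v : V) : Prop :=
  exists2 t, (forall p, p \in t -> X p.1) & v = pcomb t.

Lemma pspan_in_span X v : pspan X v -> in_span X v.
Proof.
move=> [t tX ->]; exists (unzip1 t), (fun i => (unzip2 t)`_i).
by rewrite lincomb_pcomb pairs_unzip; split=> // x /mapP [p pt ->]; apply: tX.
Qed.

Lemma pspan0 X : pspan X 0.
Proof. by exists [::]; rewrite // /pcomb big_nil. Qed.

Lemma pspan_subspace X : subspace (pspan X).
Proof.
split=> [|a u v [t1 t1X ->] [t2 t2X ->]]; first exact: pspan0.
exists ([seq (p.1, a * p.2) | p <- t1] ++ t2).
  move=> p; rewrite mem_cat => /orP [/mapP [q qt ->]|]; [exact: (t1X q)|exact: t2X].
rewrite /pcomb big_cat big_map scaler_sumr; congr (_ + _).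
by apply: eq_bigr => p _; rewrite scalerA.
Qed.

Lemma pspanZD X (a : K) u v : pspan X u -> pspan X v -> pspan X (a *: u + v).
Proof. by have [_] := pspan_subspace X; apply. Qed.

Lemma pspan_mem X x : X x -> pspan X x.
Proof.
move=> Xx; exists [:: (x, 1)]; first by move=> p; rewrite inE => /eqP ->.
by rewrite /pcomb big_seq1 scale1r.
Qed.

End Combinations.

Lemma chain_bound_seq (T : eqType) (S : set T) (F : set (set T)) (s : seq T) :
  total_on F subset -> (forall x, x \in s -> S x \/ (\bigcup_(X in F) X) x) ->
  exists2 X : set T, X = set0 \/ F X & forall x, x \in s -> S x \/ X x.
Proof.
move=> Ftot; elim: s => [|y s IH] sF; first by exists set0; [left|].
have [X XF sX] : exists2 X : set T, X = set0 \/ F X & forall x, x \in s -> S x \/ X x.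
  by apply: IH => x xs; apply: sF; rewrite inE xs orbT.
have grow Y : X `<=` Y -> (Y = set0 \/ F Y) -> S y \/ Y y ->
    exists2 Z : set T, Z = set0 \/ F Z & forall x, x \in y :: s -> S x \/ Z x.
  move=> XY YF yY; exists Y => // x; rewrite inE => /orP [/eqP -> //|/sX].
  by case=> [|/XY]; [left|right].
case: (sF y (mem_head _ _)) => [Sy|[Y FY Yy]]; first by apply: (grow X) => //; left.
case: XF => [X0|FX]; first by apply: (grow Y); [rewrite X0|right|right].
by case: (Ftot X Y FX FY) => XY; [apply: (grow Y)|apply: (grow X)]; auto.
Qed.

Section Filtered.
Variables (K : fieldType) (R : realType) (V : lmodType K) (l : V -> \bar R).
Hypothesis hl : filtered l.

Lemma filtered_l0 : l 0 = -oo%E.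
Proof. by case: hl => _ h _ _; apply/h. Qed.

Lemma filtered_eq0 v : l v = -oo%E -> v = 0.
Proof. by case: hl => _ h _ _ /h. Qed.

Lemma filteredZ (c : K) v : c != 0 -> l (c *: v) = l v.
Proof. by case: hl => _ _ h _; apply: h. Qed.

Lemma filteredN v : l (- v) = l v.
Proof. by rewrite -scaleN1r filteredZ // oppr_eq0 oner_eq0. Qed.

Lemma filteredD v w : (l (v + w) <= maxe (l v) (l w))%E.
Proof. by case: hl => _ _ _; apply. Qed.

Lemma l_orthogonal_lin_indep X : l_orthogonal l X -> lin_indep X.
Proof.
move=> [nz oX] s c us sX s0 i si; apply/eqP/negPn/negP => ci.
have := @le_bigmax_cond _ _ _ -oo%E (Ordinal si) (fun j : 'I_(size s) => c j != 0)
  (fun j => l s`_j) ci.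
rewrite -oX // s0 filtered_l0 leeNy_eq => /eqP /filtered_eq0.
by apply: nz; apply: sX; apply: mem_nth.
Qed.

Section BestApproximant.
Variables (X : set V) (u : V).
Hypothesis u_notin : ~ pspan X u.
Hypothesis u_min : forall x, pspan X x -> (l u <= l (u + x))%E.

Lemma best_approx_addr x : pspan X x -> l (u + x) = maxe (l u) (l x).
Proof.
move=> Xx; apply/le_anti; rewrite filteredD /= ge_max u_min //=.
rewrite -{1}(addKr u x); apply: le_trans (filteredD _ _) _.
by rewrite filteredN ge_max lexx u_min.
Qed.

Lemma best_approx_scale_addr (c : K) x :
  pspan X x -> c != 0 -> l (c *: u + x) = maxe (l u) (l x).
Proof.
move=> Xx c0; have -> : c *: u + x = c *: (u + c^-1 *: x).
  by rewrite scalerDr scalerA divff // scale1r.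
rewrite filteredZ // best_approx_addr ?filteredZ ?invr_eq0 //.
by rewrite -[_ *: x]addr0; apply/pspanZD/pspan0.
Qed.

Lemma porthogonal_setU1 : porthogonal l X -> porthogonal l (X `|` [set u]).
Proof.
move=> [nz oX]; split=> [y [/nz //|-> u0]|t ut tX].
  by apply/u_notin; rewrite u0; apply: pspan0.
have [/mapP [p pt up]|ut1] := boolP (u \in unzip1 t); last first.
  apply: oX => // p pt; case: (tX p pt) => // pu.
  by case/negP: ut1; rewrite -pu; apply: map_f.
have tp := perm_to_rem pt.
move: ut; rewrite (perm_uniq (perm_map _ tp)) /= => /andP [p_notin ut'].
have t'X q : q \in rem p t -> X q.1.
  move=> qt; case: (tX q (mem_rem qt)) => // qu.
  by case/negP: p_notin; rewrite -up -qu; apply: map_f.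
have t'span : pspan X (pcomb (rem p t)) by exists (rem p t).
rewrite /pcomb /plevel (perm_big _ tp) (perm_big _ tp) !big_cons -/(pcomb _) -/(plevel _ _).
case: ifP => [p20|/negbFE/eqP ->]; first by rewrite -up best_approx_scale_addr // oX.
by rewrite /= scale0r add0r oX.
Qed.

End BestApproximant.

(* Zorn is applied to the sets A with S `|` A orthogonal, rather than to the
   orthogonal supersets of S, so that the union of the empty chain qualifies. *)
Lemma porthogonal_maximal (S : set V) : porthogonal l S ->
  exists A : set V, porthogonal l (S `|` A) /\
    forall B : set V, A `<` B -> ~ porthogonal l (S `|` B).
Proof.
move=> oS; apply: Zorn_bigcup => F FP Ftot; split.
  move=> x [Sx|[X FX Xx]]; first exact: oS.1.
  by apply: (FP X FX).1; right.
move=> t ut tF.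
have [X XF tX] : exists2 X : set V, X = set0 \/ F X &
    forall x, x \in unzip1 t -> S x \/ X x.
  by apply: chain_bound_seq => // _ /mapP [p pt ->]; apply: tF.
have [_ oX] : porthogonal l (S `|` X) by case: XF => [->|/FP //]; rewrite setU0.
by apply: oX => // p pt; apply: tX; apply: map_f.
Qed.

Hypothesis hb : best_approx l.

Lemma porthogonal_extend (S : set V) : porthogonal l S ->
  exists T : set V, [/\ porthogonal l T, forall v, pspan T v & S `<=` T].
Proof.
move=> /porthogonal_maximal [A [oSA maxA]].
exists (S `|` A); split=> //.
move=> v; apply: contrapT => v_notin.
have [w0 w0T w0_min] := hb (pspan_subspace (S `|` A)) (ex_intro _ v v_notin) v_notin.
have u_min x : pspan (S `|` A) x -> (l (v - w0) <= l (v - w0 + x))%E.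
  move=> xT; have -> : v - w0 + x = v - (w0 - x) by rewrite opprB addrA addrAC.
  by apply: w0_min; rewrite addrC -scaleN1r; apply: pspanZD.
have u_notin : ~ pspan (S `|` A) (v - w0).
  move=> uT; apply: v_notin; rewrite -(subrK w0 v) -[v - w0]scale1r.
  exact: pspanZD.
apply: (maxA (A `|` [set v - w0])).
  split=> [|/(_ (v - w0) (or_intror erefl)) uA]; first exact: subsetUl.
  by apply: u_notin; apply: pspan_mem; right.
by rewrite setUA; apply: porthogonal_setU1.
Qed.

End Filtered.

Theorem proposition3p7 (K : fieldType) (R : realType) (V : lmodType K)
  (l : V -> \bar R) :
  filtered l -> best_approx l ->
  (exists S : V -> Prop, basis_in (fun _ => True) S /\ l_orthogonal l S) /\
  (forall (W S : V -> Prop), subspace W -> basis_in W S -> l_orthogonal l S ->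
     exists T : V -> Prop,
       basis_in (fun _ => True) T /\ l_orthogonal l T /\ (forall x, S x -> T x)).
Proof.
move=> hl hb.
have extend (S : set V) : l_orthogonal l S -> exists T : set V,
    basis_in (fun _ => True) T /\ l_orthogonal l T /\ (forall x, S x -> T x).
  move=> /l_orthogonalE /(porthogonal_extend hl hb) [T [/l_orthogonalE oT spanT ST]].
  exists T; split; last by split.
  split=> //; split; first exact: (l_orthogonal_lin_indep hl oT).
  by move=> w _; apply: pspan_in_span.
split=> [|W S _ _]; last exact: extend.
have [|T [bT [oT _]]] := extend set0; last by exists T.
apply/l_orthogonalE; split=> // t _ t0.
by case: t t0 => [_|p t /(_ p (mem_head _ _))//]; rewrite /pcomb /plevel !big_nil filtered_l0.
Qed.
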